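(* Let $\vec m\in\mathbb{R}^9$ with $m(9)=0$, $\sum_{i=1}^8 m(i)=0$ and $\sum_{i=1}^8 m(i)^2=1$, let $s\ge0$, and let $p\in\mathbb{R}^9$ be given by $p(i)=\frac18+s\,m(i)$ for $1\le i\le 8$ and $p(9)=0$. Let $\rho=\sum_{i=1}^9[4p(i)-\frac13]\Pi_i$. Then $\rho$ is a density operator if and only if either $s=0$, or $$s^2\le\frac1{24}\quad\text{and}\quad F(\vec m)=\frac{3}{16s}\bigl[2-\Phi(\vec m)\bigr],$$ where $\Phi(\vec m)=[m(1)+m(5)]^2+[m(2)+m(4)]^2+[m(3)+m(6)]^2+[m(7)+m(8)]^2$. Moreover $\rho$ is a pure state if and only if $s=\frac1{2\sqrt6}$ and $F(\vec m)=\frac{3\sqrt6}{8}\bigl[2-\Phi(\vec m)\bigr]$.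
   Context: Let $\omega=e^{2\pi i/3}$, standard basis $|0\rangle,|1\rangle,|2\rangle$ of $\mathbb{C}^3$, $X|j\rangle=|j+1\bmod 3\rangle$, $Z|j\rangle=\omega^j|j\rangle$, $|\psi_0\rangle=\frac1{\sqrt2}(0,1,-1)^T$; for $m,n\in\{0,1,2\}$ and $i=3m+n+1$, $\Pi_i$ is the projector onto $X^mZ^n|\psi_0\rangle$ (the canonical Hesse SIC), so $p(i)=\frac13\operatorname{Tr}(\rho\Pi_i)$. Identify index $i=3m+n+1$ with $(m,n)\in\mathbb{Z}_3^2$; the 12 affine lines are $\{1,2,3\},\{4,5,6\},\{7,8,9\},\{1,4,7\},\{2,5,8\},\{3,6,9\},\{1,5,9\},\{2,6,7\},\{3,4,8\},\{1,6,8\},\{2,4,9\},\{3,5,7\}$, and $Q$ is the set of ordered triples $(i,j,k)$ of pairwise distinct indices with $\{i,j,k\}$ a line. For $v\in\mathbb{R}^9$ define $F(v)=\sum_i v(i)^3-\frac12\sum_{(i,j,k)\in Q}v(i)v(j)v(k)$. *)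

(* Complex numbers: an arbitrary numClosedFieldType C
   (e.g. algC); the real numbers are its real elements. *)
From HB Require Import structures.
From mathcomp Require Import all_boot all_order all_algebra.
Set Implicit Arguments. Unset Strict Implicit. Unset Printing Implicit Defensive.
Import Order.TTheory GRing.Theory Num.Theory.
Local Open Scope ring_scope.

Section Hesse.
Variable C : numClosedFieldType.

(* omega = e^{2 pi i/3} = (-1 + i sqrt 3)/2 *)
Definition omega : C := (-1 + 'i * sqrtC 3) / 2%:R.

Definition Xmx : 'M[C]_3 := \matrix_(a < 3, b < 3) ((a : nat) == (b.+1 %% 3)%N)%:R.
Definition Zmx : 'M[C]_3 := \matrix_(a < 3, b < 3) (((a : nat) == b)%:R * omega ^+ a).

Definition psi0 : 'cV[C]_3 :=
  (sqrtC 2%:R)^-1 *: \col_(a < 3) (if (a : nat) == 1%N then 1 else if (a : nat) == 2%N then -1 else 0).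

Definition adjoint m n (A : 'M[C]_(m, n)) : 'M[C]_(n, m) := (map_mx (fun x => x^*) A)^T.

(* SIC vector with 0-based index k = i-1 = 3 m + n *)
Definition sic_vec (k : 'I_9) : 'cV[C]_3 := (Xmx ^+ (k %/ 3)%N) *m (Zmx ^+ (k %% 3)%N) *m psi0.
Definition Pi (k : 'I_9) : 'M[C]_3 := sic_vec k *m adjoint (sic_vec k).

Definition density (rho : 'M[C]_3) : Prop :=
  [/\ adjoint rho = rho,
      forall v : 'cV[C]_3, 0 <= (adjoint v *m rho *m v) 0 0
    & \tr rho = 1].

Definition pure_state (rho : 'M[C]_3) : Prop := density rho /\ rho *m rho = rho.

(* the 12 affine lines, 1-based indices as in the paper *)
Definition lines : seq (seq nat) :=
  [:: [:: 1;2;3]; [:: 4;5;6]; [:: 7;8;9]; [:: 1;4;7]; [:: 2;5;8]; [:: 3;6;9];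
      [:: 1;5;9]; [:: 2;6;7]; [:: 3;4;8]; [:: 1;6;8]; [:: 2;4;9]; [:: 3;5;7]].

(* Q: ordered triples (0-based ordinals) of pairwise distinct indices forming a line *)
Definition inQ (t : 'I_9 * 'I_9 * 'I_9) : bool :=
  let: (i, j, k) := t in
  [&& i != j, j != k, i != k &
      has (fun L => perm_eq L [:: i.+1; j.+1; k.+1]%N) lines].

(* entry with 1-based index *)
Definition at1 (v : 'I_9 -> C) (i : nat) : C := v (inord i.-1).

Definition F (v : 'I_9 -> C) : C :=
  \sum_(i < 9) v i ^+ 3
  - 2%:R^-1 * \sum_(t : 'I_9 * 'I_9 * 'I_9 | inQ t) v t.1.1 * v t.1.2 * v t.2.

Definition Phi (m : 'I_9 -> C) : C :=
  (at1 m 1 + at1 m 5) ^+ 2 + (at1 m 2 + at1 m 4) ^+ 2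
  + (at1 m 3 + at1 m 6) ^+ 2 + (at1 m 7 + at1 m 8) ^+ 2.

Definition pvec (s : C) (m : 'I_9 -> C) (k : 'I_9) : C :=
  if (k < 8)%N then 8%:R^-1 + s * m k else 0.

Definition rho_of (p : 'I_9 -> C) : 'M[C]_3 :=
  \sum_(k < 9) (4%:R * p k - 3%:R^-1) *: Pi k.

End Hesse.

(* rho is Hermitian of trace one, so it is a density operator iff its
   eigenvalues are nonnegative, and a pure state iff they are idempotent.  Both
   properties are read off the elementary symmetric functions e2 = sym2 rho and
   e3 = sym3 rho of the eigenvalues (e1 = 1):
   - nonnegative eigenvalues <-> e2 >= 0 and e3 = 0; here e3 = 0 is forced since
     the ninth SIC vector is isotropic for rho, so a semidefinite rho is singular;
   - idempotent eigenvalues <-> e2 = e3 = 0.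
   Computing rho explicitly in the standard basis gives e2 = 1/4 - 6 s^2 and
   e3 = s^2 (8 s F(m) - 3/2 (2 - Phi(m))), and the resulting scalar conditions
   are solved for s and F(m). *)

From HB Require Import structures.
From mathcomp Require Import all_boot all_order all_algebra ring sesquilinear spectral.
Set Implicit Arguments. Unset Strict Implicit. Unset Printing Implicit Defensive.
Import Order.TTheory GRing.Theory Num.Theory.
Local Open Scope ring_scope.

Section HermitianSpectrum.
Variable C : numClosedFieldType.

Lemma adjointM m n p (A : 'M[C]_(m, n)) (B : 'M[C]_(n, p)) :
  adjoint (A *m B) = adjoint B *m adjoint A.
Proof. by rewrite /adjoint map_mxM trmx_mul. Qed.

Lemma hermitian_diagonalization n (A : 'M[C]_n) : adjoint A = A ->
  exists (P : 'M[C]_n) (d : 'rV[C]_n),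
  [/\ P *m adjoint P = 1%:M, adjoint P *m P = 1%:M, A = adjoint P *m diag_mx d *m P
    & forall i, d 0 i \is Num.real].
Proof.
move=> hA.
have herm : A \is hermsymmx.
  by apply/is_hermitianmxP; rewrite expr0 scale1r -map_trmx -[LHS]hA.
have adjE : adjoint (spectralmx A) = invmx (spectralmx A).
  by rewrite invmx_unitary ?spectral_unitarymx // /adjoint map_trmx.
exists (spectralmx A), (spectral_diag A); split.
- by rewrite adjE mulmxV // spectral_unit.
- by rewrite adjE mulVmx // spectral_unit.
- by rewrite adjE {1}(orthomx_spectralP (hermitian_normalmx herm)).
- by move=> i; apply: (mxOverP (hermitian_spectral_diag_real herm)).
Qed.

Section UnitaryDiagonal.
Variables (n : nat) (A P : 'M[C]_n) (d : 'rV[C]_n).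
Hypotheses (hPP : P *m adjoint P = 1%:M) (hPP' : adjoint P *m P = 1%:M)
  (hA : A = adjoint P *m diag_mx d *m P).

Lemma quad_form_eigen (v : 'cV[C]_n) :
  (adjoint v *m A *m v) 0 0 = \sum_i d 0 i * ((P *m v) i 0 * ((P *m v) i 0)^*).
Proof.
have -> : adjoint v *m A *m v = adjoint (P *m v) *m diag_mx d *m (P *m v).
  by rewrite adjointM hA !mulmxA.
rewrite mul_mx_diag !mxE; apply: eq_bigr => i _; rewrite /adjoint !mxE; ring.
Qed.

Lemma psd_iff_eigen_ge0 :
  (forall v : 'cV[C]_n, 0 <= (adjoint v *m A *m v) 0 0) <-> (forall i, 0 <= d 0 i).
Proof.
split=> [psdA i | d_ge0 v].
  have := psdA (adjoint P *m delta_mx i 0).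
  rewrite quad_form_eigen mulmxA hPP mul1mx (bigD1 i) //= big1 ?addr0.
    by rewrite !mxE !eqxx /= conjC1 !mulr1.
  by move=> j ji; rewrite !mxE (negbTE ji) /= conjC0 !mulr0.
rewrite quad_form_eigen; apply: sumr_ge0 => i _.
by rewrite mulr_ge0 ?mul_conjC_ge0.
Qed.

Lemma psd_isotropic_singular (g : 'cV[C]_n) :
  (forall i, 0 <= d 0 i) -> g != 0 -> (adjoint g *m A *m g) 0 0 = 0 ->
  \prod_i d 0 i = 0.
Proof.
move=> d_ge0 g_neq0 hg; apply/eqP; apply: contraNT g_neq0 => /prodf_neq0 d_neq0.
have Pg0 : P *m g = 0.
  apply/matrixP => i j; rewrite ord1 [RHS]mxE; apply/eqP.
  rewrite quad_form_eigen in hg.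
  have /(_ i isT)/eqP := psumr_eq0P (fun k _ => mulr_ge0 (d_ge0 k) (mul_conjC_ge0 _)) hg.
  by rewrite mulf_eq0 (negbTE (d_neq0 i isT)) mul_conjC_eq0.
by rewrite -[g]mul1mx -hPP' -mulmxA Pg0 mulmx0.
Qed.

Lemma conj_mul (X Y : 'M[C]_n) :
  (adjoint P *m X *m P) *m (adjoint P *m Y *m P) = adjoint P *m (X *m Y) *m P.
Proof. by rewrite !mulmxA -(mulmxA _ P (adjoint P)) hPP mulmx1. Qed.

Lemma trace_conj (X : 'M[C]_n) : \tr (adjoint P *m X *m P) = \tr X.
Proof. by rewrite mxtrace_mulC mulmxA hPP mul1mx. Qed.

Lemma sqr_eigen : A *m A = adjoint P *m diag_mx (\row_j (d 0 j ^+ 2)) *m P.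
Proof. by rewrite hA conj_mul mulmx_diag; congr (_ *m diag_mx _ *m _). Qed.

Lemma trace_eigen : \tr A = \sum_i d 0 i.
Proof. by rewrite hA trace_conj mxtrace_diag. Qed.

Lemma trace_sqr_eigen : \tr (A *m A) = \sum_i d 0 i ^+ 2.
Proof. by rewrite sqr_eigen trace_conj mxtrace_diag; apply: eq_bigr => i _; rewrite mxE. Qed.

Lemma trace_cube_eigen : \tr (A *m A *m A) = \sum_i d 0 i ^+ 3.
Proof.
rewrite sqr_eigen hA conj_mul trace_conj mulmx_diag mxtrace_diag.
by apply: eq_bigr => i _; rewrite !mxE exprS mulrC.
Qed.

Lemma proj_iff_eigen_idem : A *m A = A <-> (forall i, d 0 i ^+ 2 = d 0 i).
Proof.
have unconj X : P *m (adjoint P *m X *m P) *m adjoint P = X.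
  by rewrite !mulmxA hPP mul1mx -mulmxA hPP mulmx1.
rewrite sqr_eigen hA; split=> [/(congr1 (fun M => P *m M *m adjoint P)) | d_idem].
  by rewrite /= !unconj => /matrixP eqd i; have := eqd i i; rewrite !mxE eqxx.
by congr (_ *m diag_mx _ *m _); apply/rowP => j; rewrite mxE d_idem.
Qed.

End UnitaryDiagonal.
End HermitianSpectrum.

Local Notation o3 k := (@Ordinal 3 k isT).

Section ThreeEigenvalues.
Variable C : numClosedFieldType.

Lemma sum3 (f : 'I_3 -> C) : \sum_(i < 3) f i = f (o3 0) + f (o3 1) + f (o3 2).
Proof. by rewrite !big_ord_recr big_ord0 /= add0r; congr (f _ + f _ + f _); apply: val_inj. Qed.

Lemma prod3 (f : 'I_3 -> C) : \prod_(i < 3) f i = f (o3 0) * f (o3 1) * f (o3 2).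
Proof. by rewrite !big_ord_recr big_ord0 /= mul1r; congr (f _ * f _ * f _); apply: val_inj. Qed.

Lemma forall3 (P : 'I_3 -> Prop) :
  (forall i, P i) <-> [/\ P (o3 0), P (o3 1) & P (o3 2)].
Proof.
split=> [Pi | [P0 P1 P2] [[|[|[|//]]] lti]]; first by split; apply: Pi.
- by rewrite (_ : Ordinal lti = o3 0) //; apply: val_inj.
- by rewrite (_ : Ordinal lti = o3 1) //; apply: val_inj.
- by rewrite (_ : Ordinal lti = o3 2) //; apply: val_inj.
Qed.

Lemma pair_ge0 (a b : C) : a \is Num.real -> b \is Num.real ->
  a + b = 1 -> 0 <= a * b -> 0 <= a /\ 0 <= b.
Proof.
move=> ar br ab1 ab_ge0; split.
  by rewrite -[a]mulr1 -ab1 mulrDr -expr2 addr_ge0 ?real_exprn_even_ge0.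
by rewrite -[b]mulr1 -ab1 mulrDr mulrC -expr2 addr_ge0 ?real_exprn_even_ge0.
Qed.

Lemma pair_idem (a b : C) : a + b = 1 -> a * b = 0 -> a ^+ 2 = a /\ b ^+ 2 = b.
Proof.
move=> ab1 ab0; split.
  by rewrite -[X in _ = X]mulr1 -ab1 mulrDr ab0 addr0 expr2.
by rewrite -[X in _ = X]mulr1 -ab1 mulrDr mulrC ab0 add0r expr2.
Qed.

Lemma zero_of_three (a b c : C) : a * b * c = 0 ->
  [\/ a = 0 /\ b + c = a + b + c /\ b * c = a * b + a * c + b * c,
      b = 0 /\ a + c = a + b + c /\ a * c = a * b + a * c + b * c
    | c = 0 /\ a + b = a + b + c /\ a * b = a * b + a * c + b * c].
Proof.
move/eqP; rewrite !mulf_eq0 -orbA => /or3P[] /eqP z.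
- by apply: Or31; split => //; rewrite z; split; ring.
- by apply: Or32; split => //; rewrite z; split; ring.
- by apply: Or33; split => //; rewrite z; split; ring.
Qed.

Lemma roots_ge0 (a b c : C) : a \is Num.real -> b \is Num.real -> c \is Num.real ->
  a + b + c = 1 -> 0 <= a * b + a * c + b * c -> a * b * c = 0 ->
  [/\ 0 <= a, 0 <= b & 0 <= c].
Proof.
move=> ar br cr e1 e2 /zero_of_three[] [z [s1 s2]];
  rewrite e1 in s1; rewrite -s2 in e2; rewrite z lexx.
- by have [] := pair_ge0 br cr s1 e2.
- by have [] := pair_ge0 ar cr s1 e2.
- by have [] := pair_ge0 ar br s1 e2.
Qed.

Lemma roots_idem (a b c : C) : a + b + c = 1 -> a * b + a * c + b * c = 0 -> a * b * c = 0 ->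
  [/\ a ^+ 2 = a, b ^+ 2 = b & c ^+ 2 = c].
Proof.
move=> e1 e2 /zero_of_three[] [z [s1 s2]];
  rewrite e1 in s1; rewrite -s2 in e2; rewrite z [0 ^+ 2]expr2 mul0r.
- by have [] := pair_idem s1 e2.
- by have [] := pair_idem s1 e2.
- by have [] := pair_idem s1 e2.
Qed.

End ThreeEigenvalues.

Section ThreeByThree.
Variable C : numClosedFieldType.

(* The second and third elementary symmetric functions of the eigenvalues of a
   3x3 matrix, expressed through traces of powers by Newton's identities. *)
Definition sym2 (A : 'M[C]_3) : C := (\tr A ^+ 2 - \tr (A *m A)) / 2%:R.
Definition sym3 (A : 'M[C]_3) : C :=
  (\tr A ^+ 3 - 3%:R * \tr A * \tr (A *m A) + 2%:R * \tr (A *m A *m A)) / 6%:R.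

Lemma sym_eigen (A P : 'M[C]_3) (d : 'rV[C]_3) :
  P *m adjoint P = 1%:M -> A = adjoint P *m diag_mx d *m P ->
  sym2 A = d 0 (o3 0) * d 0 (o3 1) + d 0 (o3 0) * d 0 (o3 2) + d 0 (o3 1) * d 0 (o3 2)
  /\ sym3 A = d 0 (o3 0) * d 0 (o3 1) * d 0 (o3 2).
Proof.
move=> hPP hA; rewrite /sym2 /sym3 (trace_eigen hPP hA) (trace_sqr_eigen hPP hA).
by rewrite (trace_cube_eigen hPP hA) !sum3; split; field.
Qed.

Lemma density3 (A : 'M[C]_3) (g : 'cV[C]_3) :
  adjoint A = A -> \tr A = 1 -> g != 0 -> (adjoint g *m A *m g) 0 0 = 0 ->
  density A <-> 0 <= sym2 A /\ sym3 A = 0.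
Proof.
move=> hermA trA1 g_neq0 isog.
have [P [d [hPP hPP' hA d_real]]] := hermitian_diagonalization hermA.
have [-> ->] := sym_eigen hPP hA.
have e1 : d 0 (o3 0) + d 0 (o3 1) + d 0 (o3 2) = 1 by rewrite -sum3 -(trace_eigen hPP hA).
split=> [[_ /(psd_iff_eigen_ge0 hPP hA) d_ge0 _] | [e2 e3]].
  have [d0 d1 d2] := (forall3 _).1 d_ge0.
  split; first by rewrite !addr_ge0 ?mulr_ge0.
  by rewrite -prod3 (psd_isotropic_singular hPP' hA d_ge0 g_neq0 isog).
split => //; apply/(psd_iff_eigen_ge0 hPP hA)/forall3.
by have [r0 r1 r2] := (forall3 _).1 d_real; apply: roots_ge0.
Qed.

Lemma pure3 (A : 'M[C]_3) : adjoint A = A -> \tr A = 1 ->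
  pure_state A <-> sym2 A = 0 /\ sym3 A = 0.
Proof.
move=> hermA trA1.
have [P [d [hPP _ hA d_real]]] := hermitian_diagonalization hermA.
have [-> ->] := sym_eigen hPP hA.
have e1 : d 0 (o3 0) + d 0 (o3 1) + d 0 (o3 2) = 1 by rewrite -sum3 -(trace_eigen hPP hA).
rewrite /pure_state (proj_iff_eigen_idem hPP hA) forall3.
move: e1; set a := d 0 _; set b := d 0 _; set c := d 0 _ => e1.
split=> [[_ [qa qb qc]] | [e2 e3]].
  have cube (x : C) : x ^+ 2 = x -> x ^+ 3 = x by move=> qx; rewrite exprS qx -expr2 qx.
  rewrite (_ : a * b + a * c + b * c = ((a + b + c) ^+ 2 - (a ^+ 2 + b ^+ 2 + c ^+ 2)) / 2%:R);
    last by field.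
  rewrite (_ : a * b * c = ((a + b + c) ^+ 3 - 3%:R * (a + b + c) * (a ^+ 2 + b ^+ 2 + c ^+ 2)
     + 2%:R * (a ^+ 3 + b ^+ 3 + c ^+ 3)) / 6%:R); last by field.
  by rewrite (cube _ qa) (cube _ qb) (cube _ qc) qa qb qc e1; split; field.
have [qa qb qc] := roots_idem e1 e2 e3.
split=> //; split=> //; apply/(psd_iff_eigen_ge0 hPP hA)/forall3.
suff : [/\ 0 <= a, 0 <= b & 0 <= c] by [].
have [ra rb rc] := (forall3 _).1 d_real.
by rewrite -qa -qb -qc !real_exprn_even_ge0.
Qed.

End ThreeByThree.

Section ScalarConditions.
Variable C : numClosedFieldType.

Lemma cubic_condition (s f phi : C) : s != 0 ->
  s ^+ 2 * (8%:R * s * f - 3%:R / 2%:R * (2%:R - phi)) = 0 <->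
  f = 3%:R / (16%:R * s) * (2%:R - phi).
Proof.
move=> s_neq0; split=> [/eqP | ->]; last by field; rewrite s_neq0.
rewrite mulf_eq0 expf_eq0 (negbTE s_neq0) /= subr_eq0 => /eqP hf.
apply: (mulfI (_ : 8%:R * s != 0)); first by rewrite mulf_neq0 ?pnatr_eq0.
by rewrite hf; field; rewrite s_neq0.
Qed.

Lemma density_condition (s f phi : C) :
  (0 <= 4%:R^-1 - 6%:R * s ^+ 2 /\
   s ^+ 2 * (8%:R * s * f - 3%:R / 2%:R * (2%:R - phi)) = 0) <->
  (s = 0 \/ (s ^+ 2 <= 24%:R^-1 /\ f = 3%:R / (16%:R * s) * (2%:R - phi))).
Proof.
rewrite (_ : 4%:R^-1 - 6%:R * s ^+ 2 = 6%:R * (24%:R^-1 - s ^+ 2)); last by field.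
rewrite pmulr_rge0 ?ltr0n // subr_ge0.
have [-> | s_neq0] := eqVneq s 0.
  by split=> _; [left | rewrite expr0n mul0r invr_ge0 ler0n].
rewrite (cubic_condition _ _ s_neq0).
by split=> [|[/eqP|]]; [right | rewrite (negbTE s_neq0) | ].
Qed.

Lemma pure_condition (s f phi : C) : 0 <= s ->
  (4%:R^-1 - 6%:R * s ^+ 2 = 0 /\
   s ^+ 2 * (8%:R * s * f - 3%:R / 2%:R * (2%:R - phi)) = 0) <->
  (s = (2%:R * sqrtC 6%:R)^-1 /\ f = 3%:R * sqrtC 6%:R / 8%:R * (2%:R - phi)).
Proof.
move=> s_ge0; set r := (2%:R * sqrtC 6%:R)^-1.
have sqrt6_neq0 : sqrtC 6%:R != 0 :> C by rewrite sqrtC_eq0 pnatr_eq0.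
have r_neq0 : r != 0 by rewrite invr_eq0 mulf_neq0 ?pnatr_eq0.
have boundE : 4%:R^-1 - 6%:R * s ^+ 2 = 0 <-> s = r.
  have r_ge0 : 0 <= r by rewrite invr_ge0 mulr_ge0 ?ler0n ?sqrtC_ge0 ?ler0n.
  rewrite (_ : 4%:R^-1 - 6%:R * s ^+ 2 = 6%:R * (r ^+ 2 - s ^+ 2)); last first.
    by rewrite /r exprVn exprMn sqrtCK; field.
  rewrite (rwP eqP) mulf_eq0 pnatr_eq0 /= subr_eq0 eq_sym (eqrXn2 _ s_ge0 r_ge0) //.
  by split=> /eqP.
rewrite boundE; split=> -[sE]; rewrite sE (cubic_condition _ _ r_neq0) => ->.
  by split=> //; rewrite /r; field.
by split=> //; rewrite /r; field.
Qed.

End ScalarConditions.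

Local Notation o9 k := (@Ordinal 9 k isT).

Section HesseSIC.
Variable C : numClosedFieldType.
Local Notation w := (omega C).

Lemma omega_sqr : w ^+ 2 = -1 - w.
Proof.
rewrite /omega.
have ii : 'i * 'i = -1 :> C by rewrite -expr2 sqrCi.
have r3 : sqrtC 3%:R * sqrtC 3%:R = 3%:R :> C by rewrite -expr2 sqrtCK.
by field: ii r3.
Qed.

Lemma conj_omega : w^* = w ^+ 2.
Proof.
have r3 : (sqrtC 3%:R : C)^* = sqrtC 3%:R by rewrite conj_Creal // ger0_real // sqrtC_ge0 ler0n.
have r2 : (2%:R : C)^* = 2%:R by rewrite conj_Creal // ger0_real // ler0n.
rewrite omega_sqr /omega fmorph_div rmorphD rmorphN rmorph1 rmorphM /= conjCi r3 r2.
by field.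
Qed.

Lemma conj_omegaX n : (w ^+ n)^* = w ^+ (2 * n).
Proof. by rewrite rmorphXn /= conj_omega -exprM. Qed.

Lemma omega_neq0 : w != 0.
Proof.
apply/eqP => w0; have /eqP := omega_sqr.
by rewrite w0 expr0n /= subr0 eq_sym oppr_eq0 oner_eq0.
Qed.

Definition sic_index (k : nat) : nat * nat := (k %/ 3, k %% 3)%N.
Definition succ3 (a : nat) : nat := match a with 0 => 1 | 1 => 2 | _ => 0 end%N.
Definition pred3 (a : nat) : nat := match a with 0 => 2 | 1 => 0 | _ => 1 end%N.

(* sqrt 2 times the coordinates of X^a Z^b psi0: omega^b at position a + 1,
   - omega^(2b) at position a + 2, and 0 at position a; and their conjugates. *)
Definition sic_coord (k i : nat) : C :=
  let: (a, b) := sic_index k in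
  if i == succ3 a then w ^+ b else if i == pred3 a then - w ^+ (2 * b) else 0.
Definition sic_coord_conj (k i : nat) : C :=
  let: (a, b) := sic_index k in
  if i == succ3 a then w ^+ (2 * b) else if i == pred3 a then - w ^+ (4 * b) else 0.

Lemma sic_coordC k i : (sic_coord k i)^* = sic_coord_conj k i.
Proof.
rewrite /sic_coord /sic_coord_conj; case: (sic_index k) => a b.
case: ifP => _; first by rewrite conj_omegaX.
case: ifP => _; last by rewrite rmorph0.
by rewrite rmorphN /= conj_omegaX mulnA.
Qed.

Lemma sic_vecE (k : 'I_9) (i : 'I_3) : sic_vec C k i 0 = (sqrtC 2%:R)^-1 * sic_coord k i.
Proof.
case: k => [[|[|[|[|[|[|[|[|[|//]]]]]]]]] ltk]; case: i => [[|[|[|//]]] lti];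
rewrite /sic_vec /psi0 /sic_coord /= ?mulmxE ?expr0 ?expr1 ?expr2 ?mul1r -?mulmxE
  !(mxE, sum3) /=; ring: omega_sqr.
Qed.

End HesseSIC.

Section HesseRho.
Variable C : numClosedFieldType.
Local Notation w := (omega C).

Lemma sum9 (f : 'I_9 -> C) : \sum_(i < 9) f i =
  f (o9 0) + f (o9 1) + f (o9 2) + f (o9 3) + f (o9 4) + f (o9 5) + f (o9 6) + f (o9 7) + f (o9 8).
Proof.
rewrite !big_ord_recr big_ord0 /= add0r.
by congr (f _ + f _ + f _ + f _ + f _ + f _ + f _ + f _ + f _); apply: val_inj.
Qed.

(* Entry of a scaled matrix; unlike mxE, it does not unfold A itself. *)
Lemma scalemx_entry m n (a : C) (A : 'M[C]_(m, n)) i j : (a *: A) i j = a * A i j.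
Proof. by rewrite mxE. Qed.

Lemma Pi_entry (k : 'I_9) (i j : 'I_3) : Pi C k i j = sic_vec C k i 0 * (sic_vec C k j 0)^*.
Proof. by rewrite /Pi; move: (sic_vec C k) => v; rewrite /adjoint !mxE big_ord1 !mxE. Qed.

Lemma sic_vec_conj (k : 'I_9) (i : 'I_3) :
  (sic_vec C k i 0)^* = (sqrtC 2%:R)^-1 * sic_coord_conj C k i.
Proof.
rewrite sic_vecE rmorphM /= sic_coordC conj_Creal //.
by rewrite ger0_real // invr_ge0 sqrtC_ge0 ler0n.
Qed.

Lemma Pi_coord (k : 'I_9) (i j : 'I_3) :
  Pi C k i j = 2%:R^-1 * (sic_coord C k i * sic_coord_conj C k j).
Proof. by rewrite Pi_entry sic_vecE sic_vec_conj mulrACA -invfM -expr2 sqrtCK. Qed.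

Definition rho_entry (s : C) (m : 'I_9 -> C) (i j : nat) : C :=
  match i, j with
  | 0, 0 => 4%:R^-1 + 2%:R * s * (m (o9 3) + m (o9 4) + m (o9 5) + m (o9 6) + m (o9 7))
  | 1, 1 => 4%:R^-1 + 2%:R * s * (m (o9 0) + m (o9 1) + m (o9 2) + m (o9 6) + m (o9 7))
  | 2, 2 => 2%:R^-1 + 2%:R * s * (m (o9 0) + m (o9 1) + m (o9 2) + m (o9 3) + m (o9 4) + m (o9 5))
  | 1, 2 => 2%:R * s * (m (o9 1) - m (o9 0)) + w * (2%:R * s * (m (o9 1) - m (o9 2)))
  | 2, 1 => 2%:R * s * (m (o9 2) - m (o9 0)) + w * (2%:R * s * (m (o9 2) - m (o9 1)))
  | 2, 0 => 2%:R * s * (m (o9 4) - m (o9 3)) + w * (2%:R * s * (m (o9 4) - m (o9 5)))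
  | 0, 2 => 2%:R * s * (m (o9 5) - m (o9 3)) + w * (2%:R * s * (m (o9 5) - m (o9 4)))
  | 0, 1 => 2%:R * s * (m (o9 7) - m (o9 6)) + w * (4%:R^-1 + 2%:R * s * m (o9 7))
  | 1, 0 => - (4%:R^-1 + 2%:R * s * m (o9 6)) - w * (4%:R^-1 + 2%:R * s * m (o9 7))
  | _, _ => 0
  end.

Definition rho_mx (s : C) (m : 'I_9 -> C) : 'M[C]_3 := \matrix_(i < 3, j < 3) rho_entry s m i j.

Lemma rho_explicit (s : C) (m : 'I_9 -> C) : rho_of (pvec s m) = rho_mx s m.
Proof.
apply/matrixP => i j; rewrite /rho_of summxE sum9 !scalemx_entry !Pi_coord /pvec !mxE /=.
case: i => [[|[|[|//]]] lti]; case: j => [[|[|[|//]]] ltj];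
  by rewrite /sic_coord /sic_coord_conj /rho_entry /=; field: (omega_sqr C).
Qed.

End HesseRho.

Section RhoInvariants.
Variable C : numClosedFieldType.

Lemma rho_hermitian (p : 'I_9 -> C) : (forall k, p k \is Num.real) ->
  adjoint (rho_of p) = rho_of p.
Proof.
move=> p_real; apply/matrixP => i j.
rewrite /adjoint !mxE /rho_of !summxE rmorph_sum; apply: eq_bigr => k _.
rewrite !scalemx_entry !Pi_entry rmorphM [X in _ * X]rmorphM /= conjCK [X in X * _]conj_Creal.
  by rewrite [X in _ * X]mulrC.
by rewrite rpredB ?rpredM ?rpred_nat ?p_real // rpredV rpred_nat.
Qed.

Lemma pvec_real (s : C) (m : 'I_9 -> C) : s \is Num.real -> (forall i, m i \is Num.real) ->
  forall k, pvec s m k \is Num.real.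
Proof.
move=> s_real m_real k; rewrite /pvec; case: ifP => _; last by rewrite rpred0.
by rewrite rpredD ?rpredM ?m_real // rpredV rpred_nat.
Qed.

Lemma quad_form_coord n (v : 'cV[C]_n) (A : 'M[C]_n) :
  (adjoint v *m A *m v) 0 0 = \sum_j \sum_i (v i 0)^* * A i j * v j 0.
Proof.
rewrite !mxE; apply: eq_bigr => j _; rewrite !mxE mulr_suml.
by apply: eq_bigr => i _; rewrite /adjoint !mxE.
Qed.

(* The polynomials of the statement, written with 0-based indices for a vector
   m with m(9) = 0: the squared norm, F and Phi. Only the eight lines avoiding
   the ninth point contribute to F. *)
Definition norm8 (m : 'I_9 -> C) : C :=
  m (o9 0) ^+ 2 + m (o9 1) ^+ 2 + m (o9 2) ^+ 2 + m (o9 3) ^+ 2 + m (o9 4) ^+ 2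
  + m (o9 5) ^+ 2 + m (o9 6) ^+ 2 + m (o9 7) ^+ 2.
Definition lines8 (m : 'I_9 -> C) : C :=
  m (o9 0) * m (o9 1) * m (o9 2) + m (o9 3) * m (o9 4) * m (o9 5)
  + m (o9 0) * m (o9 3) * m (o9 6) + m (o9 1) * m (o9 4) * m (o9 7)
  + m (o9 1) * m (o9 5) * m (o9 6) + m (o9 2) * m (o9 3) * m (o9 7)
  + m (o9 0) * m (o9 5) * m (o9 7) + m (o9 2) * m (o9 4) * m (o9 6).
Definition F8 (m : 'I_9 -> C) : C :=
  m (o9 0) ^+ 3 + m (o9 1) ^+ 3 + m (o9 2) ^+ 3 + m (o9 3) ^+ 3 + m (o9 4) ^+ 3
  + m (o9 5) ^+ 3 + m (o9 6) ^+ 3 + m (o9 7) ^+ 3 - 3%:R * lines8 m.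
Definition Phi8 (m : 'I_9 -> C) : C :=
  (m (o9 0) + m (o9 4)) ^+ 2 + (m (o9 1) + m (o9 3)) ^+ 2
  + (m (o9 2) + m (o9 5)) ^+ 2 + (m (o9 6) + m (o9 7)) ^+ 2.

(* The traces of the powers of rho, by direct expansion using omega^2 = -1 - omega
   and the constraint sum_(i < 8) m(i) = 0, solved for m(8) (1-based). *)
Section Traces.
Variables (s : C) (m : 'I_9 -> C).
Hypothesis m7E : m (o9 7) =
  - (m (o9 0) + m (o9 1) + m (o9 2) + m (o9 3) + m (o9 4) + m (o9 5) + m (o9 6)).

Lemma rho_trace : \tr (rho_mx s m) = 1.
Proof. by rewrite /mxtrace sum3 !mxE /rho_entry /= m7E; field. Qed.

Lemma rho_sqr_trace : \tr (rho_mx s m *m rho_mx s m) = 2%:R^-1 + 12%:R * s ^+ 2 * norm8 m.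
Proof.
rewrite /norm8 /mxtrace sum3 !mxE !sum3 !mxE /rho_entry /= m7E.
by field: (omega_sqr C).
Qed.

Lemma rho_cube_trace : \tr (rho_mx s m *m rho_mx s m *m rho_mx s m) =
  (6%:R * (s ^+ 2 * (8%:R * s * F8 m - 3%:R / 2%:R * (2%:R * norm8 m - Phi8 m))) - 1
   + 3%:R * (2%:R^-1 + 12%:R * s ^+ 2 * norm8 m)) / 2%:R.
Proof.
rewrite /norm8 /F8 /lines8 /Phi8 /mxtrace sum3 !mxE !sum3 !mxE !sum3 !mxE /rho_entry /= m7E.
by field: (omega_sqr C).
Qed.

(* The ninth SIC vector is isotropic for rho: p(9) = 0 and the overlaps
   |<psi_9, psi_i>|^2 = 1/4 make the weights sum to zero. *)
Lemma sic9_isotropic : (adjoint (sic_vec C (o9 8)) *m rho_mx s m *m sic_vec C (o9 8)) 0 0 = 0.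
Proof.
rewrite quad_form_coord !sum3 !sic_vec_conj !sic_vecE !mxE.
rewrite /sic_coord /sic_coord_conj /rho_entry /= m7E.
by field: (omega_sqr C); rewrite sqrtC_eq0 pnatr_eq0.
Qed.

Hypothesis hN : norm8 m = 1.

Lemma rho_sym2 : sym2 (rho_mx s m) = 4%:R^-1 - 6%:R * s ^+ 2.
Proof. by rewrite /sym2 rho_trace rho_sqr_trace hN; field. Qed.

Lemma rho_sym3 : sym3 (rho_mx s m) =
  s ^+ 2 * (8%:R * s * F8 m - 3%:R / 2%:R * (2%:R - Phi8 m)).
Proof. by rewrite /sym3 rho_trace rho_sqr_trace rho_cube_trace hN; field. Qed.

End Traces.

(* Its first coordinate is omega^2 / sqrt 2. *)
Lemma sic9_neq0 : sic_vec C (o9 8) != 0.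
Proof.
apply/eqP => /matrixP/(_ (o3 0) 0)/eqP; rewrite sic_vecE mxE /sic_coord /=.
by rewrite mulf_eq0 invr_eq0 sqrtC_eq0 pnatr_eq0 expf_eq0 (negbTE (omega_neq0 C)).
Qed.

End RhoInvariants.

Section CubicForm.
Variable C : numClosedFieldType.

Definition inQ_nat (a b c : nat) : bool :=
  [&& a != b, b != c, a != c &
      has (fun L => perm_eq L [:: a.+1; b.+1; c.+1]%N) lines].

Lemma sum_Q_nat (m : 'I_9 -> C) :
  \sum_(t : 'I_9 * 'I_9 * 'I_9 | inQ t) m t.1.1 * m t.1.2 * m t.2 =
  \sum_(0 <= a < 9) \sum_(0 <= b < 9) \sum_(0 <= c < 9)
     (inQ_nat a b c)%:R * (m (inord a) * m (inord b) * m (inord c)).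
Proof.
rewrite [RHS](big_mkord xpredT).
under [RHS]eq_bigr => a _ do (rewrite (big_mkord xpredT);
  under eq_bigr => b _ do rewrite (big_mkord xpredT)).
rewrite big_mkcond.
transitivity (\sum_(p : 'I_9 * 'I_9) \sum_(k < 9) (if inQ (p, k) then m p.1 * m p.2 * m k else 0)).
  by rewrite pair_big; apply: eq_bigr => -[p k].
rewrite [RHS]pair_big /=; apply: eq_bigr => -[i j] _; apply: eq_bigr => k _.
by rewrite /= !inord_val; case: ifP => h; rewrite [inQ_nat _ _ _]h ?mul1r ?mul0r.
Qed.

Definition Q_list : seq (nat * nat * nat) := [::
  (0,1,2); (0,2,1); (0,3,6); (0,4,8); (0,5,7); (0,6,3); (0,7,5); (0,8,4); (1,0,2);
  (1,2,0); (1,3,8); (1,4,7); (1,5,6); (1,6,5); (1,7,4); (1,8,3); (2,0,1); (2,1,0);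
  (2,3,7); (2,4,6); (2,5,8); (2,6,4); (2,7,3); (2,8,5); (3,0,6); (3,1,8); (3,2,7);
  (3,4,5); (3,5,4); (3,6,0); (3,7,2); (3,8,1); (4,0,8); (4,1,7); (4,2,6); (4,3,5);
  (4,5,3); (4,6,2); (4,7,1); (4,8,0); (5,0,7); (5,1,6); (5,2,8); (5,3,4); (5,4,3);
  (5,6,1); (5,7,0); (5,8,2); (6,0,3); (6,1,5); (6,2,4); (6,3,0); (6,4,2); (6,5,1);
  (6,7,8); (6,8,7); (7,0,5); (7,1,4); (7,2,3); (7,3,2); (7,4,1); (7,5,0); (7,6,8);
  (7,8,6); (8,0,4); (8,1,3); (8,2,5); (8,3,1); (8,4,0); (8,5,2); (8,6,7); (8,7,6)].

Lemma sum_Q_list (G : nat -> nat -> nat -> C) :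
  \sum_(0 <= a < 9) \sum_(0 <= b < 9) \sum_(0 <= c < 9) (inQ_nat a b c)%:R * G a b c =
  \sum_(t <- Q_list) G t.1.1 t.1.2 t.2.
Proof.
have -> : Q_list = [seq t <- allpairs pair (allpairs pair (iota 0 9) (iota 0 9)) (iota 0 9)
                   | inQ_nat t.1.1 t.1.2 t.2] by vm_compute.
symmetry; rewrite big_filter big_mkcond big_allpairs big_allpairs /=.
apply: eq_bigr => a _; apply: eq_bigr => b _; apply: eq_bigr => c _.
by case: inQ_nat; rewrite ?mul1r ?mul0r.
Qed.

Lemma inord9 n (ltn9 : (n < 9)%N) : inord n = Ordinal ltn9 :> 'I_9.
Proof. by apply: val_inj; rewrite /= inordK. Qed.

Local Notation inord9E := (@inord9 0 isT, @inord9 1 isT, @inord9 2 isT, @inord9 3 isT,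
  @inord9 4 isT, @inord9 5 isT, @inord9 6 isT, @inord9 7 isT, @inord9 8 isT).

Lemma F_explicit (m : 'I_9 -> C) : m (o9 8) = 0 -> F m = F8 m.
Proof.
move=> m8; rewrite /F sum_Q_nat sum_Q_list sum9 !big_cons big_nil /=.
by rewrite !inord9E m8 /F8 /lines8; field.
Qed.

Lemma Phi_explicit (m : 'I_9 -> C) : Phi m = Phi8 m.
Proof. by rewrite /Phi /at1 /= !inord9E. Qed.

End CubicForm.

Theorem mainTheorem10 (C : numClosedFieldType) (m : 'I_9 -> C) (s : C)
  (hreal : forall i, m i \is Num.real)
  (h9 : m ord_max = 0)
  (hsum : \sum_(i < 9 | (i < 8)%N) m i = 0)
  (hnorm : \sum_(i < 9 | (i < 8)%N) m i ^+ 2 = 1)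
  (hs : 0 <= s) :
  (density (rho_of (pvec s m)) <->
     (s = 0 \/
      (s ^+ 2 <= 24%:R^-1 /\ F m = 3%:R / (16%:R * s) * (2%:R - Phi m))))
  /\
  (pure_state (rho_of (pvec s m)) <->
     (s = (2%:R * sqrtC 6%:R)^-1 /\ F m = 3%:R * sqrtC 6%:R / 8%:R * (2%:R - Phi m))).
Proof.
have m8 : m (o9 8) = 0 by rewrite -h9; congr m; apply: val_inj.
have m7E : m (o9 7) =
    - (m (o9 0) + m (o9 1) + m (o9 2) + m (o9 3) + m (o9 4) + m (o9 5) + m (o9 6)).
  by apply/eqP; rewrite -subr_eq0 opprK addrC; move: hsum; rewrite big_mkcond sum9 /= addr0 => ->.
have hN : norm8 m = 1 by move: hnorm; rewrite big_mkcond sum9 /= addr0.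
have herm : adjoint (rho_mx s m) = rho_mx s m.
  by rewrite -rho_explicit rho_hermitian //; apply: pvec_real => //; apply: ger0_real.
rewrite rho_explicit F_explicit // Phi_explicit; split.
  rewrite (density3 herm (rho_trace s m7E) (sic9_neq0 C) (sic9_isotropic s m7E)).
  by rewrite rho_sym2 // rho_sym3 //; apply: density_condition.
by rewrite (pure3 herm (rho_trace s m7E)) rho_sym2 // rho_sym3 //; apply: pure_condition.
Qed.
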